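(* Let $q$ be an odd prime power, $d\ge 2$, $\gamma\in\mathbb{F}_q^*$ a non-square, and let $W\subset \{v\in\mathbb{F}_q^d:\|v\|\in\{1,\gamma\}\}$ contain exactly one element of each pair $\{v,-v\}$. Let $E\subset\mathbb{F}_q^d$ and let $F\subset W\times\mathbb{F}_q$, identified with the set of non-degenerate hyperplanes $\{H_{v,t}:(v,t)\in F\}$ (each non-degenerate hyperplane has exactly one such representation), and write $F(v,t)$ for the indicator function of $F$. Then $$|\Delta(E,F)| \ge \frac{|E|^2|F|^2}{2q^{-1}|E|^2|F|^2 + 2q^{d-1}|E||F|\cdot \max_{v\in W}\sum_{t\in\mathbb{F}_q}F(v,t)}.$$ In particular, if $|E||F|>q^{d+1}$, then $|\Delta(E,F)| > q/4$, so $|\Delta(E,F)|\gg q$.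
   Context: $\mathbb{F}_q$ is the field with $q$ elements; $x\cdot y=\sum_i x_iy_i$, $\|x\|=x_1^2+\dots+x_d^2$. $H_{v,t}=\{y\in\mathbb{F}_q^d: y\cdot v=t\}$; such a hyperplane is non-degenerate if $\|v\|\ne 0$. $O_d(\mathbb{F}_q)$ is the group of linear maps $\theta$ of $\mathbb{F}_q^d$ with $\|\theta y\|=\|y\|$ for all $y$. Pairs $(x,h)$ and $(x',h')$ (point, hyperplane) are equivalent if there is $\theta\in O_d(\mathbb{F}_q)$ with $\{\theta(y-x)+x': y\in h\}=h'$. $\Delta(E,F)$ is the set of equivalence classes of pairs $(x,H_{v,t})$ with $x\in E$, $(v,t)\in F$. *)

From HB Require Import structures.
From mathcomp Require Import all_boot all_order all_algebra all_field.
Set Implicit Arguments. Unset Strict Implicit. Unset Printing Implicit Defensive.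
Import Order.TTheory GRing.Theory Num.Theory.
Local Open Scope ring_scope.

Section Defs.
Variables (K : finFieldType) (d : nat).

Definition dotv (x y : 'rV[K]_d) : K := \sum_(i < d) x 0 i * y 0 i.

Definition normv (x : 'rV[K]_d) : K := \sum_(i < d) x 0 i ^+ 2.

Definition hyperplane (v : 'rV[K]_d) (t : K) : {set 'rV[K]_d} :=
  [set y | dotv y v == t].

Definition orthb (M : 'M[K]_d) : bool := [forall y, normv (y *m M) == normv y].

Definition pair_equiv (p p' : 'rV[K]_d * {set 'rV[K]_d}) : bool :=
  [exists M : 'M[K]_d,
     orthb M && ([set (y - p.1) *m M + p'.1 | y in p.2] == p'.2)].

Definition eqclass (p : 'rV[K]_d * {set 'rV[K]_d}) :
  {set 'rV[K]_d * {set 'rV[K]_d}} := [set p' | pair_equiv p p'].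

Definition Delta (E : {set 'rV[K]_d}) (F : {set 'rV[K]_d * K}) :
  {set {set 'rV[K]_d * {set 'rV[K]_d}}} :=
  [set eqclass (x, hyperplane vt.1 vt.2) | x in E, vt in F].

End Defs.

(* Congruent pairs (x, H_{v,t}) have the same ||v|| and the same squared offset
   (t - x.v)^2: the orthogonal map sends v to c v' with ||v|| = c^2 ||v'||, and since 1 and
   gamma lie in different square classes, c = 1 or -1.  Hence |Delta(E,F)| is at least the
   number of values of this invariant on E x F.  By Cauchy-Schwarz, |E|^2 |F|^2 is at most
   that number times the number of pairs of elements of E x F with equal invariants, and
   these pairs are counted by sum_c nu(c) (nu(c) + nu(-c)) <= 2 sum_c nu(c)^2, where nu(c)
   counts the (x,(v,t)) with t - x.v = c.  The deviation nu(c) - |E||F|/q is a sum over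
   (v,t) in F of deviations of the fibres of x |-> x.v on E, so a second Cauchy-Schwarz
   bounds the variance of nu by |F| max_v |F(v,.)| sum_(v in W) D(v), with D(v) the
   variance of the fibres along v.  Since the nonzero multiples of the vectors of W are
   pairwise distinct and D is scale invariant, (q - 1) sum_(v in W) D(v) is at most the sum
   of D over all of F_q^d, which counting solutions of x.w = y.w evaluates to
   (q - 1) q^(d-1) |E|. *)

From mathcomp Require Import all_boot all_order all_algebra all_field.
From mathcomp Require Import ring lra.
Set Implicit Arguments. Unset Strict Implicit. Unset Printing Implicit Defensive.
Import Order.TTheory GRing.Theory Num.Theory.
Local Open Scope ring_scope.

Section DotProduct.
Variables (K : finFieldType) (d : nat).
Implicit Types (x y z w u v : 'rV[K]_d).
Local Notation dot := (@dotv K d).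

Lemma dotvC x y : dot x y = dot y x.
Proof. by apply: eq_bigr => i _; rewrite mulrC. Qed.

Lemma dotvDl x y z : dot (x + y) z = dot x z + dot y z.
Proof. by rewrite /dotv -big_split; apply: eq_bigr => i _; rewrite !mxE mulrDl. Qed.

Lemma dotvBl x y z : dot (x - y) z = dot x z - dot y z.
Proof. by rewrite /dotv -sumrB; apply: eq_bigr => i _; rewrite !mxE mulrBl. Qed.

Lemma dotvZl a x z : dot (a *: x) z = a * dot x z.
Proof. by rewrite /dotv mulr_sumr; apply: eq_bigr => i _; rewrite !mxE mulrA. Qed.

Lemma dotvDr x y z : dot z (x + y) = dot z x + dot z y.
Proof. by rewrite !(dotvC z) dotvDl. Qed.

Lemma dotvBr x y z : dot z (x - y) = dot z x - dot z y.
Proof. by rewrite !(dotvC z) dotvBl. Qed.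

Lemma dotvZr a x z : dot z (a *: x) = a * dot z x.
Proof. by rewrite !(dotvC z) dotvZl. Qed.

Lemma normvE x : normv x = dot x x.
Proof. by apply: eq_bigr => i _; rewrite expr2. Qed.

Lemma normvZ a x : normv (a *: x) = a ^+ 2 * normv x.
Proof. by rewrite !normvE dotvZl dotvZr mulrA expr2. Qed.

Lemma dotv_delta y i : dot y (delta_mx 0 i) = y 0 i.
Proof.
rewrite /dotv (bigD1 i) //= big1 => [|j /negbTE ji]; last by rewrite mxE ji mulr0.
by rewrite mxE !eqxx mulr1 addr0.
Qed.

Lemma dotv_eq0 w : (forall y, dot y w = 0) -> w = 0.
Proof. by move=> w0; apply/rowP => i; rewrite mxE -dotv_delta dotvC w0. Qed.

Lemma hyperplane_subset v t u b : normv v != 0 ->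
  hyperplane v t \subset hyperplane u b -> exists2 c, u = c *: v & b = c * t.
Proof.
move=> nv0 /subsetP sub.
have onH y : dot y v = t -> dot y u = b.
  by move=> yv; apply/eqP; have := sub y; rewrite !inE yv eqxx; apply.
have proj_orth y : dot (y - (dot y v / normv v) *: v) v = 0.
  by rewrite dotvBl dotvZl -normvE mulfVK // subrr.
pose y0 := (t / normv v) *: v.
have y0v : dot y0 v = t by rewrite dotvZl -normvE mulfVK.
have orth_u z : dot z v = 0 -> dot z u = 0.
  move=> zv; have := onH (y0 + z); rewrite dotvDl y0v zv addr0 => /(_ erefl).
  by rewrite dotvDl (onH _ y0v) -{2}[b]addr0 => /addrI.
pose c := dot u v / normv v.
have uE : u = c *: v.
  apply/eqP; rewrite -subr_eq0; apply/eqP/dotv_eq0 => y.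
  set s := dot y v / normv v.
  have yE : y = (y - s *: v) + s *: v by rewrite subrK.
  have ps : dot (y - s *: v) v = 0 := proj_orth y.
  rewrite dotvBr dotvZr yE !(dotvDl (y - s *: v)) (orth_u _ ps) ps !dotvZl.
  by rewrite -normvE /c (dotvC u); field.
by exists c => //; rewrite -(onH _ y0v) uE dotvZr y0v.
Qed.

Lemma orthb_dotv (M : 'M[K]_d) x y : (2%:R : K) != 0 -> orthb M ->
  dot (x *m M) (y *m M) = dot x y.
Proof.
move=> two_neq0 /forallP oM; apply: (mulIf two_neq0).
have := eqP (oM (x + y)); rewrite mulmxDl !normvE !dotvDl !dotvDr -!normvE.
rewrite (eqP (oM x)) (eqP (oM y)) (dotvC (y *m M)) (dotvC y) => /eqP.
by rewrite -subr_eq0 => /eqP e; apply: subr0_eq; rewrite -e; ring.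
Qed.

End DotProduct.

Lemma odd_card_two_neq0 (K : finFieldType) : odd #|K| -> (2%:R : K) != 0.
Proof.
move=> oddK; apply/eqP => two0.
have pchar2 : 2%N \in [pchar K] by rewrite inE /= two0 eqxx.
move: oddK (finNzRing_gt1 K); rewrite (card_pprimeChar pchar2) oddX orbF.
by move=> /eqP ->.
Qed.

Section PairInvariant.
Variables (K : finFieldType) (d : nat) (gamma : K).
Hypothesis gamma_nonsquare : ~~ [exists y : K, y ^+ 2 == gamma].
Local Notation dot := (@dotv K d).

Lemma sqr_scale_norm_classes (a b c : K) :
  (a == 1) || (a == gamma) -> (b == 1) || (b == gamma) ->
  a = c ^+ 2 * b -> a = b /\ c ^+ 2 = 1.
Proof.
have nsq y : y ^+ 2 != gamma.
  by apply: contra gamma_nonsquare => sq; apply/existsP; exists y.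
have gamma_neq0 : gamma != 0 by move: (nsq 0); rewrite expr0n /= eq_sym.
case/orP => /eqP ->; case/orP => /eqP -> E.
- by rewrite E mulr1.
- have c_neq0 : c != 0 by apply/eqP => c0; move/eqP: E; rewrite c0 expr0n mul0r oner_eq0.
  by move: (nsq c^-1); rewrite exprVn -[gamma](mulKf (expf_neq0 2 c_neq0)) -E mulr1 eqxx.
- by move: (nsq c); rewrite E mulr1 eqxx.
- by split=> //; apply: (mulIf gamma_neq0); rewrite mul1r -E.
Qed.

Lemma pair_equiv_invariant x v t x' v' t' : (2%:R : K) != 0 ->
  (normv v == 1) || (normv v == gamma) -> (normv v' == 1) || (normv v' == gamma) ->
  pair_equiv (x, hyperplane v t) (x', hyperplane v' t') ->
  normv v = normv v' /\ (t - dot x v) ^+ 2 = (t' - dot x' v') ^+ 2.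
Proof.
move=> two_neq0 nv nv' /existsP[M /andP[oM /eqP /= HM]].
set u := v *m M.
have nu : normv u = normv v by have /forallP/(_ v)/eqP := oM.
have nv'_neq0 : normv v' != 0.
  case/orP: nv' => /eqP ->; first exact: oner_neq0.
  by apply: contra gamma_nonsquare => /eqP g0; apply/existsP; exists 0; rewrite g0 expr0n.
have [c uE tE] : exists2 c, u = c *: v' & (t - dot x v) + dot x' u = c * t'.
  apply: hyperplane_subset nv'_neq0 _; apply/subsetP => y; rewrite -HM.
  case/imsetP => z; rewrite inE => /eqP zv ->.
  by rewrite inE dotvDl orthb_dotv // dotvBl zv.
have nvE : normv v = c ^+ 2 * normv v' by rewrite -nu uE normvZ.
have [-> c2] := sqr_scale_norm_classes nv nv' nvE.
split=> //; have -> : t - dot x v = c * (t' - dot x' v') by rewrite mulrBr -tE uE dotvZr addrK.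
by rewrite exprMn c2 mul1r.
Qed.

End PairInvariant.

Lemma pair_equiv_refl (K : finFieldType) (d : nat) (p : 'rV[K]_d * {set 'rV[K]_d}) :
  pair_equiv p p.
Proof.
apply/existsP; exists 1%:M; rewrite /orthb; apply/andP; split.
  by apply/forallP => y; rewrite mulmx1.
by rewrite -[X in _ == X]imset_id; apply/eqP/eq_imset => y; rewrite mulmx1 subrK.
Qed.

Section IndicatorSums.
Variables (R : pzSemiRingType) (T : finType).
Implicit Types (A : {pred T}) (a b : T).

Lemma sum_eq_indicator a : \sum_c ((a == c)%:R : R) = 1.
Proof. by rewrite (bigD1 a) //= eqxx big1 ?addr0 // => c /negbTE; rewrite eq_sym => ->. Qed.

Lemma sum_eq_indicator_in A a : a \in A -> \sum_(c in A) ((a == c)%:R : R) = 1.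
Proof.
move=> aA; rewrite (bigD1 a) //= eqxx big1 ?addr0 // => c /andP[_ /negbTE].
by rewrite eq_sym => ->.
Qed.

Lemma sum_eq_indicator2 a b : \sum_c ((a == c)%:R * (b == c)%:R : R) = (a == b)%:R.
Proof.
rewrite (bigD1 a) //= eqxx mul1r big1 ?addr0 ?(eq_sym b) // => c /negbTE.
by rewrite eq_sym => ->; rewrite mul0r.
Qed.

Lemma sum_eq_indicator2_in A a b : a \in A ->
  \sum_(c in A) ((a == c)%:R * (b == c)%:R : R) = (a == b)%:R.
Proof.
move=> aA; rewrite (bigD1 a) //= eqxx mul1r big1 ?addr0 ?(eq_sym b) // => c /andP[_ /negbTE].
by rewrite eq_sym => ->; rewrite mul0r.
Qed.

End IndicatorSums.

Lemma sum_sqr_ge (R : realFieldType) (T : finType) (A : {pred T}) (f : T -> R) :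
  (\sum_(i in A) f i) ^+ 2 <= #|A|%:R * \sum_(i in A) f i ^+ 2.
Proof.
set S := \sum_(i in A) f i; set S2 := \sum_(i in A) f i ^+ 2.
have row_sum i : \sum_(j in A) (f i - f j) ^+ 2 = f i ^+ 2 * #|A|%:R - 2 * f i * S + S2.
  under eq_bigr => j _ do rewrite sqrrB.
  rewrite big_split sumrB /= sumr_const sumrMnl -mulr_sumr -/S -/S2.
  by rewrite mulr_natr -mulrA mulr_natl.
have : 0 <= \sum_(i in A) \sum_(j in A) (f i - f j) ^+ 2.
  by do 2!apply: sumr_ge0 => ? _; apply: sqr_ge0.
under eq_bigr => i _ do rewrite row_sum.
rewrite big_split sumrB /= sumr_const -!mulr_suml -mulr_sumr -/S -/S2 mulr_natr expr2.
lra.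
Qed.

Lemma sum_setX (R : nmodType) (I J : finType) (A : {set I}) (B : {set J})
    (f : I * J -> R) :
  \sum_(p in setX A B) f p = \sum_(i in A) \sum_(j in B) f (i, j).
Proof. by rewrite pair_big; apply: eq_big => [[i j]|[i j] _]; rewrite ?in_setX. Qed.

Section Collisions.
Variables (T U : finType) (P : {set T}).

Lemma sum_collisionsE (R : pzSemiRingType) (f g : T -> U) :
  \sum_(p in P) \sum_(p' in P) ((f p == g p')%:R : R) =
  \sum_c (\sum_(p in P) ((f p == c)%:R : R)) * (\sum_(p' in P) ((g p' == c)%:R : R)).
Proof.
under [RHS]eq_bigr => c _ do rewrite mulr_suml.
rewrite [RHS]exchange_big /=; apply: eq_bigr => p _.
under [RHS]eq_bigr => c _ do rewrite mulr_sumr.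
by rewrite [RHS]exchange_big /=; apply: eq_bigr => p' _; rewrite sum_eq_indicator2.
Qed.

Lemma card_collisions_ge (R : realFieldType) (f : T -> U) :
  (#|P|%:R : R) ^+ 2 <=
    #|f @: P|%:R * \sum_(p in P) \sum_(p' in P) ((f p == f p')%:R : R).
Proof.
have fiberE p : p \in P -> \sum_(c in f @: P) ((f p == c)%:R : R) = 1.
  by move=> pP; rewrite sum_eq_indicator_in // imset_f.
have -> : (#|P|%:R : R) = \sum_(c in f @: P) \sum_(p in P) ((f p == c)%:R : R).
  by rewrite exchange_big /= -sumr_const; apply: eq_bigr => p /fiberE.
suff -> : \sum_(p in P) \sum_(p' in P) ((f p == f p')%:R : R) =
    \sum_(c in f @: P) (\sum_(p in P) ((f p == c)%:R : R)) ^+ 2 by apply: sum_sqr_ge.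
under [RHS]eq_bigr => c _ do rewrite expr2 mulr_suml.
rewrite [RHS]exchange_big /=; apply: eq_bigr => p pP.
under [RHS]eq_bigr => c _ do rewrite mulr_sumr.
rewrite [RHS]exchange_big /=; apply: eq_bigr => p' _.
by rewrite sum_eq_indicator2_in // imset_f.
Qed.

Lemma leq_card_imset_factor (V : finType) (f : T -> U) (g : T -> V) :
  {in P &, forall p p', g p = g p' -> f p = f p'} -> (#|f @: P| <= #|g @: P|)%N.
Proof.
move=> fg; have [->|[p0 p0P]] := set_0Vmem P; first by rewrite imset0 cards0.
pose h c := odflt (f p0) (omap f [pick p in P | g p == c]).
apply: leq_trans (leq_imset_card h _); apply/subset_leq_card/subsetP => _ /imsetP[p pP ->].
apply/imsetP; exists (g p); first exact: imset_f.
rewrite /h; case: pickP => [p' /andP[p'P /eqP gp'] | /(_ p)]; last by rewrite pP eqxx.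
by rewrite /= (fg _ _ p'P pP gp').
Qed.

End Collisions.

Lemma card_field_gt0 (K : finFieldType) : 0 < (#|K|%:R : rat).
Proof. by rewrite ltr0n; apply/card_gt0P; exists 0. Qed.

Lemma card_field_gt1 (K : finFieldType) : 1 < (#|K|%:R : rat).
Proof. by rewrite ltr1n finNzRing_gt1. Qed.

Section DotFibers.
Variables (K : finFieldType) (d : nat) (E : {set 'rV[K]_d}).
Implicit Types (x y z v w : 'rV[K]_d).
Local Notation dot := (@dotv K d).
Local Notation q := (#|K|%:R : rat).
Local Notation nE := (#|E|%:R : rat).

Lemma sum_rV1 : \sum_(w : 'rV[K]_d) (1 : rat) = q ^+ d.
Proof. by rewrite sumr_const card_mx mul1n natrX. Qed.

Lemma card_dotv_kernel z : z != 0 -> q * \sum_w ((dot w z == 0)%:R : rat) = q ^+ d.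
Proof.
move=> z_neq0; have [i zi] : exists i, z 0 i != 0.
  apply/existsP; apply: contraR z_neq0 => /existsPn zi.
  by apply/eqP/rowP => i; rewrite mxE; apply/eqP/negbNE.
(* Translation by multiples of w0, where w0.z = 1, permutes the fibres of w |-> w.z. *)
pose w0 : 'rV[K]_d := (z 0 i)^-1 *: delta_mx 0 i.
have w0z : dot w0 z = 1 by rewrite dotvZl dotvC dotv_delta mulVf.
have fiberE c : \sum_w ((dot w z == c)%:R : rat) = \sum_w ((dot w z == 0)%:R : rat).
  rewrite (reindex_inj (addIr (c *: w0))) /=; apply: eq_bigr => w _.
  by rewrite dotvDl dotvZl w0z mulr1 -{2}(add0r c) (inj_eq (addIr c)).
rewrite -sum_rV1 [RHS](eq_bigr (fun w => \sum_c ((dot w z == c)%:R : rat))); last first.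
  by move=> w _; rewrite sum_eq_indicator.
by rewrite exchange_big /= (eq_bigr _ (fun c _ => fiberE c)) sumr_const mulr_natl.
Qed.

Definition dotv_count v u := \sum_(x in E) ((dot x v == u)%:R : rat).

Definition dotv_energy v := \sum_(x in E) \sum_(y in E) ((dot x v == dot y v)%:R : rat).

Definition dotv_dev v := \sum_u (dotv_count v u - nE / q) ^+ 2.

Lemma sum_dotv_count v : \sum_u dotv_count v u = nE.
Proof.
rewrite exchange_big /=; under eq_bigr => x _ do rewrite sum_eq_indicator.
by rewrite sumr_const.
Qed.

Lemma sum_dotv_count_sqr v : \sum_u dotv_count v u ^+ 2 = dotv_energy v.
Proof.
under eq_bigr => u _ do rewrite expr2 /dotv_count mulr_suml.
rewrite exchange_big /=; apply: eq_bigr => x _.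
under eq_bigr => u _ do rewrite mulr_sumr.
by rewrite exchange_big /=; apply: eq_bigr => y _; rewrite sum_eq_indicator2.
Qed.

Lemma dotv_devE v : q * dotv_dev v = q * dotv_energy v - nE ^+ 2.
Proof.
have q_neq0 : q != 0 by rewrite gt_eqF ?card_field_gt0.
rewrite /dotv_dev; under eq_bigr => u _ do rewrite sqrrB.
rewrite big_split /= sumrB sum_dotv_count_sqr sumr_const sumrMnl -mulr_suml.
by rewrite sum_dotv_count -mulr_natr -[_ *+ 2]mulr_natr; field.
Qed.

Lemma dotv_dev_ge0 v : 0 <= dotv_dev v.
Proof. by apply: sumr_ge0 => u _; apply: sqr_ge0. Qed.

Lemma dotv_devZ r v : r != 0 -> dotv_dev (r *: v) = dotv_dev v.
Proof.
move=> r_neq0; apply: (mulfI (lt0r_neq0 (card_field_gt0 K))); rewrite !dotv_devE.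
suff -> : dotv_energy (r *: v) = dotv_energy v by [].
apply: eq_bigr => x _; apply: eq_bigr => y _.
by rewrite !dotvZr (inj_eq (mulfI r_neq0)).
Qed.

Lemma sum_dotv_collide x y :
  q * \sum_w ((dot x w == dot y w)%:R : rat) = q ^+ d + (x == y)%:R * (q ^+ d.+1 - q ^+ d).
Proof.
have [<-|xy] := eqVneq x y.
  by under eq_bigr => w _ do rewrite eqxx; rewrite sum_rV1 mul1r exprS addrC subrK.
rewrite mul0r addr0 -(card_dotv_kernel (z := x - y)) ?subr_eq0 //; congr (_ * _).
by apply: eq_bigr => w _; rewrite dotvBr subr_eq0 (dotvC w x) (dotvC w y).
Qed.

Lemma sum_dotv_dev : q * \sum_w dotv_dev w = (q - 1) * q ^+ d * nE.
Proof.
rewrite mulr_sumr; under eq_bigr => w _ do rewrite dotv_devE.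
rewrite sumrB sumr_const card_mx mul1n -mulr_sumr.
have -> : \sum_w dotv_energy w =
    \sum_(x in E) \sum_(y in E) \sum_w ((dot x w == dot y w)%:R : rat).
  by rewrite exchange_big /=; apply: eq_bigr => x _; exact: exchange_big.
rewrite mulr_sumr; under eq_bigr => x _ do rewrite mulr_sumr.
under eq_bigr => x xE do under eq_bigr => y _ do rewrite sum_dotv_collide.
under eq_bigr => x xE do
  rewrite big_split /= sumr_const -mulr_suml (sum_eq_indicator_in _ xE).
rewrite sumr_const -[_ *+ #|E|]mulr_natr -[_ *+ #|E|]mulr_natr.
by rewrite -[_ *+ (_ ^ d)]mulr_natr natrX exprS; ring.
Qed.
End DotFibers.

Section RepresentativeDirections.
Variables (K : finFieldType) (d : nat) (gamma : K) (W E : {set 'rV[K]_d}).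
Hypothesis gamma_nonsquare : ~~ [exists y : K, y ^+ 2 == gamma].
Hypothesis W_norm : forall v, v \in W -> (normv v == 1) || (normv v == gamma).
Hypothesis W_sign : forall v, (normv v == 1) || (normv v == gamma) ->
  (v \in W) (+) (- v \in W).
Local Notation q := (#|K|%:R : rat).
Local Notation nE := (#|E|%:R : rat).

Lemma scale_W_inj :
  {in setX [set~ 0] W &, injective (fun rv : K * 'rV[K]_d => rv.1 *: rv.2)}.
Proof.
move=> [r v] [r' v']; rewrite !in_setX !in_setC1 /= => /andP[r0 vW] /andP[r'0 v'W] rv.
have v'E : v' = (r'^-1 * r) *: v by rewrite -scalerA rv scalerA mulVf // scale1r.
have nv' : normv v' = (r'^-1 * r) ^+ 2 * normv v by rewrite v'E normvZ.
have [_ /eqP] := sqr_scale_norm_classes gamma_nonsquare (W_norm v'W) (W_norm vW) nv'.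
rewrite sqrf_eq1 => /orP[] /eqP c1.
  by rewrite v'E c1 scale1r -(mulVKf r'0 r) c1 mulr1.
by move: (W_sign (W_norm vW)); rewrite vW -scaleN1r -c1 -v'E v'W.
Qed.

Lemma sum_dotv_dev_W : (0 < d)%N -> \sum_(v in W) dotv_dev E v <= q ^+ d.-1 * nE.
Proof.
move=> d_gt0; pose G := dotv_dev E.
have q1_gt0 : 0 < q - 1 by rewrite subr_gt0 card_field_gt1.
have scaled : (q - 1) * \sum_(v in W) G v =
    \sum_(w in [set rv.1 *: rv.2 | rv in setX [set~ 0] W]) G w.
  have -> : q - 1 = #|[set~ (0 : K)]|%:R.
    by rewrite cardsC1 -subn1 natrB // ltnW // finNzRing_gt1.
  rewrite big_imset /=; last exact: scale_W_inj.
  rewrite sum_setX mulr_natl -sumr_const; apply: eq_bigr => r; rewrite in_setC1 => r_neq0.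
  by apply: eq_bigr => v _; rewrite /G dotv_devZ.
have sub_all : (q - 1) * \sum_(v in W) G v <= \sum_w G w.
  rewrite scaled [X in _ <= X](bigID (mem [set rv.1 *: rv.2 | rv in setX [set~ 0] W])) /=.
  by rewrite lerDl; apply: sumr_ge0 => w _; apply: dotv_dev_ge0.
rewrite -(ler_pM2l (mulr_gt0 (card_field_gt0 K) q1_gt0)) -mulrA.
apply: le_trans (ler_wpM2l (ltW (card_field_gt0 K)) sub_all) _.
by rewrite sum_dotv_dev -{1}(prednK d_gt0) exprS; lra.
Qed.

End RepresentativeDirections.

Section OffsetCounts.
Variables (K : finFieldType) (d : nat) (W E : {set 'rV[K]_d}) (F : {set 'rV[K]_d * K}).
Hypothesis F_sub : F \subset setX W [set: K].
Local Notation dot := (@dotv K d).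
Local Notation q := (#|K|%:R : rat).
Local Notation nE := (#|E|%:R : rat).
Local Notation nF := (#|F|%:R : rat).
Local Notation mx := ((\max_(v in W) #|[set t : K | (v, t) \in F]|)%:R : rat).

Definition offset (p : 'rV[K]_d * ('rV[K]_d * K)) : K := p.2.2 - dot p.1 p.2.1.

Definition offset_count c := \sum_(p in setX E F) ((offset p == c)%:R : rat).

Lemma sum_offset_count : \sum_c offset_count c = nE * nF.
Proof.
rewrite exchange_big /=; under eq_bigr => p _ do rewrite sum_eq_indicator.
by rewrite sumr_const cardsX natrM.
Qed.

Lemma offset_count_dev c :
  offset_count c - nE * nF / q = \sum_(vt in F) (dotv_count E vt.1 (vt.2 - c) - nE / q).
Proof.
rewrite sumrB sumr_const -[_ / q *+ _]mulr_natr mulrAC; congr (_ - _).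
rewrite /offset_count sum_setX exchange_big /=; apply: eq_bigr => vt _.
by apply: eq_bigr => x _; rewrite /offset /= [in RHS]eq_sym !subr_eq addrC.
Qed.

Lemma sum_dotv_dev_F : \sum_(vt in F) dotv_dev E vt.1 <= mx * \sum_(v in W) dotv_dev E v.
Proof.
rewrite (partition_big (fun vt => vt.1) (mem W)); last first.
  by move=> [v t] /(subsetP F_sub); rewrite in_setX => /andP[].
rewrite mulr_sumr; apply: ler_sum => v vW.
rewrite (eq_bigr (fun _ => dotv_dev E v)); last by move=> vt /andP[_ /eqP ->].
rewrite sumr_const -[X in X <= _]mulr_natl ler_wpM2r ?dotv_dev_ge0 // ler_nat.
apply: leq_trans (leq_bigmax_cond _ vW); apply: leq_trans (leq_imset_card (pair v) _).
apply/subset_leq_card/subsetP => -[v' t] /andP[vtF /eqP /= v'v].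
by rewrite -v'v imset_f ?inE.
Qed.

Lemma offset_count_variance :
  \sum_c (offset_count c - nE * nF / q) ^+ 2 <= nF * mx * \sum_(v in W) dotv_dev E v.
Proof.
under [X in X <= _]eq_bigr => c _ do rewrite offset_count_dev.
apply: le_trans
  (_ : \sum_c nF * \sum_(vt in F) (dotv_count E vt.1 (vt.2 - c) - nE / q) ^+ 2 <= _).
  by apply: ler_sum => c _; apply: sum_sqr_ge.
rewrite -mulr_sumr exchange_big /= -mulrA ler_wpM2l ?ler0n //.
suff -> : \sum_(vt in F) \sum_c (dotv_count E vt.1 (vt.2 - c) - nE / q) ^+ 2 =
    \sum_(vt in F) dotv_dev E vt.1 by apply: sum_dotv_dev_F.
apply: eq_bigr => vt _; rewrite /dotv_dev (reindex_inj (inv_inj (subKr vt.2))) /=.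
by apply: eq_bigr => u _; rewrite subKr.
Qed.

End OffsetCounts.

Section DeltaBound.
Variables (K : finFieldType) (d : nat) (gamma : K).
Variables (W E : {set 'rV[K]_d}) (F : {set 'rV[K]_d * K}).
Hypothesis two_neq0 : (2%:R : K) != 0.
Hypothesis d_gt0 : (0 < d)%N.
Hypothesis gamma_nonsquare : ~~ [exists y : K, y ^+ 2 == gamma].
Hypothesis W_norm : forall v, v \in W -> (normv v == 1) || (normv v == gamma).
Hypothesis W_sign : forall v, (normv v == 1) || (normv v == gamma) ->
  (v \in W) (+) (- v \in W).
Hypothesis F_sub : F \subset setX W [set: K].
Local Notation q := (#|K|%:R : rat).
Local Notation nE := (#|E|%:R : rat).
Local Notation nF := (#|F|%:R : rat).
Local Notation mx := ((\max_(v in W) #|[set t : K | (v, t) \in F]|)%:R : rat).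
Local Notation den := (2 * q^-1 * nE ^+ 2 * nF ^+ 2 + 2 * q ^+ d.-1 * nE * nF * mx).
Local Notation nu := (offset_count E F).

Definition pair_invariant (p : 'rV[K]_d * ('rV[K]_d * K)) := (normv p.2.1, offset p ^+ 2).

Lemma sum_offset_count_sqr :
  \sum_c nu c ^+ 2 <= nE ^+ 2 * nF ^+ 2 / q + q ^+ d.-1 * nE * nF * mx.
Proof.
have q_neq0 : q != 0 by rewrite gt_eqF ?card_field_gt0.
have -> : \sum_c nu c ^+ 2 = \sum_c (nu c - nE * nF / q) ^+ 2 + (nE * nF) ^+ 2 / q.
  under [X in _ = X + _]eq_bigr => c _ do rewrite sqrrB.
  rewrite big_split sumrB /= sumr_const sumrMnl -mulr_suml sum_offset_count.
  by rewrite -[_ *+ 2]mulr_natr -[_ *+ #|K|]mulr_natr; field.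
have dev_W := sum_dotv_dev_W E gamma_nonsquare W_norm W_sign d_gt0.
have := offset_count_variance E F_sub.
have : nF * mx * \sum_(v in W) dotv_dev E v <= nF * mx * (q ^+ d.-1 * nE).
  by rewrite ler_wpM2l ?mulr_ge0 ?ler0n.
by rewrite exprMn; lra.
Qed.

Lemma pair_invariant_collisions :
  \sum_(p in setX E F) \sum_(p' in setX E F)
    ((pair_invariant p == pair_invariant p')%:R : rat) <= den.
Proof.
set P := setX E F.
have split_sqr :
    \sum_(p in P) \sum_(p' in P) ((pair_invariant p == pair_invariant p')%:R : rat)
    <= \sum_c nu c ^+ 2 + \sum_c nu c * nu (- c).
  have nu_opp c : nu (- c) = \sum_(p in P) ((- offset p == c)%:R : rat).
    by apply: eq_bigr => p _; rewrite eqr_oppLR.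
  under [X in _ <= _ + X]eq_bigr => c _ do rewrite nu_opp.
  under [X in _ <= X + _]eq_bigr => c _ do rewrite expr2.
  rewrite -!sum_collisionsE -big_split /=; apply: ler_sum => p _.
  rewrite -big_split /=; apply: ler_sum => p' _.
  case: eqP => [[_ /eqP] | _]; last by rewrite addr_ge0 ?ler0n.
  by rewrite eqf_sqr => /orP[] ->; rewrite ?lerDl ?lerDr ler0n.
have reflect_le : \sum_c nu c * nu (- c) <= \sum_c nu c ^+ 2.
  have sqr_opp : \sum_c nu (- c) ^+ 2 = \sum_c nu c ^+ 2.
    by rewrite [LHS](reindex_inj oppr_inj) /=; apply: eq_bigr => c _; rewrite opprK.
  apply: le_trans (_ : _ <= \sum_c (nu c ^+ 2 + nu (- c) ^+ 2) / 2) _.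
    apply: ler_sum => c _; have := sqr_ge0 (nu c - nu (- c)); rewrite sqrrB; lra.
  by rewrite -mulr_suml big_split /= sqr_opp; lra.
by move: split_sqr reflect_le sum_offset_count_sqr; lra.
Qed.

Lemma card_pair_invariant_le : (#|pair_invariant @: setX E F| <= #|Delta E F|)%N.
Proof.
pose cls (p : 'rV[K]_d * ('rV[K]_d * K)) := eqclass (p.1, hyperplane p.2.1 p.2.2).
have -> : Delta E F = cls @: setX E F.
  by rewrite /Delta curry_imset2X; apply: eq_imset => -[x vt].
apply: leq_card_imset_factor => -[x [v t]] [x' [v' t']] /setXP[_ vtF] /setXP[_ vt'F].
have /setXP[vW _] := subsetP F_sub _ vtF; have /setXP[v'W _] := subsetP F_sub _ vt'F.
move=> same_class.
have : (x', hyperplane v' t') \in cls (x', (v', t')) by rewrite inE pair_equiv_refl.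
rewrite -same_class inE /pair_invariant /offset /=.
by case/(pair_equiv_invariant gamma_nonsquare two_neq0 (W_norm vW) (W_norm v'W)) => -> ->.
Qed.

Lemma card_Delta_collision_bound : (nE * nF) ^+ 2 <= #|Delta E F|%:R * den.
Proof.
have := card_collisions_ge (setX E F) rat pair_invariant.
rewrite cardsX natrM; set k := #|_ @: _|%:R; set Q := \sum_(p in _) _ => CS.
have k_le : k <= #|Delta E F|%:R by rewrite ler_nat card_pair_invariant_le.
have Q_le : Q <= den := pair_invariant_collisions.
apply: le_trans CS (le_trans (ler_wpM2l (ler0n _ _) Q_le) _).
by rewrite ler_wpM2r // (le_trans _ Q_le) // sumr_ge0 // => p _; rewrite sumr_ge0.
Qed.

Lemma den_mul_card_field_lt : q ^+ d.+1 < nE * nF -> den * q < 4 * (nE * nF) ^+ 2.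
Proof.
move=> large; have q_gt0 := card_field_gt0 K.
have mx_le_q : mx <= q.
  rewrite ler_nat; apply/bigmax_leqP => v _.
  by rewrite -[X in (_ <= X)%N]cardsT subset_leq_card ?subsetT.
have qd : q ^+ d.+1 = q ^+ d.-1 * q * q by rewrite -{1}(prednK d_gt0) !exprS; ring.
have : q ^+ d.-1 * (nE * nF) * q * mx <= q ^+ d.-1 * (nE * nF) * q * q.
  by rewrite ler_wpM2l // !mulr_ge0 ?exprn_ge0 ?ler0n // ltW.
have -> : den * q = 2 * (nE * nF) ^+ 2 + 2 * q ^+ d.-1 * (nE * nF) * mx * q.
  by field; rewrite gt_eqF.
have : q ^+ d.-1 * q * q * (nE * nF) < (nE * nF) * (nE * nF).
  by rewrite ltr_pM2r -?qd // (le_lt_trans _ large) // exprn_ge0 // ltW.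
by rewrite -qd; nra.
Qed.

End DeltaBound.

Lemma quarter_lt (R : realFieldType) (D den N q : R) :
  0 <= den -> N ^+ 2 <= D * den -> den * q < 4 * N ^+ 2 -> q / 4 < D.
Proof.
move=> den_ge0 N_le den_lt; rewrite ltNge; apply/negP => D_le.
have := ler_wpM2r den_ge0 D_le; lra.
Qed.

Theorem mainTheorem2 (K : finFieldType) (d : nat) (gamma : K)
    (W : {set 'rV[K]_d}) (E : {set 'rV[K]_d}) (F : {set 'rV[K]_d * K}) :
  odd #|K| ->
  (2 <= d)%N ->
  gamma != 0 ->
  ~~ [exists y : K, y ^+ 2 == gamma] ->
  (forall v, v \in W -> (normv v == 1) || (normv v == gamma)) ->
  (forall v, (normv v == 1) || (normv v == gamma) ->
     (v \in W) (+) (- v \in W)) ->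
  F \subset setX W [set: K] ->
  let q : rat := (#|K|)%:R in
  let nE : rat := (#|E|)%:R in
  let nF : rat := (#|F|)%:R in
  let mx : rat := (\max_(v in W) #|[set t : K | (v, t) \in F]|)%:R in
  (#|Delta E F|)%:R >=
    (nE ^+ 2 * nF ^+ 2) /
      (2 * q^-1 * nE ^+ 2 * nF ^+ 2 + 2 * q ^+ (d.-1) * nE * nF * mx)
  /\ (nE * nF > q ^+ d.+1 -> (#|Delta E F|)%:R > q / 4).
Proof.
(* [gamma != 0] is implied by [gamma] being a non-square. *)
move=> oddK d_ge2 _ gamma_nonsquare W_norm W_sign F_sub q nE nF mx.
have d_gt0 : (0 < d)%N by apply: leq_trans d_ge2.
have two_neq0 := odd_card_two_neq0 oddK.
have bound :=
  card_Delta_collision_bound E two_neq0 d_gt0 gamma_nonsquare W_norm W_sign F_sub.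
set den := _ + _ in bound *.
have den_ge0 : 0 <= den.
  by rewrite addr_ge0 // !mulr_ge0 ?exprn_ge0 ?invr_ge0 ?ler0n.
split.
  have [->|den_neq0] := eqVneq den 0; first by rewrite invr0 mulr0 ler0n.
  by rewrite ler_pdivrMr ?lt_def ?den_neq0 // -exprMn.
move=> large; apply: quarter_lt den_ge0 bound _.
exact: den_mul_card_field_lt d_gt0 large.
Qed.
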